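(* There is an absolute constant $C$ such that the following holds: if $\Gamma$ is the incidence graph of a $(v,k,\lambda)$ symmetric design of order $q=k-\lambda\geq 2$, and $n=2v$ is the number of vertices of $\Gamma$, then $\mu(\Gamma)\leq C\sqrt{n}\log n$; that is, $\mu(\Gamma)=O(\sqrt{n}\log n)$.
   Context: A symmetric design with parameters $(v,k,\lambda)$ is a pair $(X,\mathcal{B})$ where $X$ is a set of $v$ points and $\mathcal{B}$ is a family of $k$-subsets of $X$ (blocks) such that any two distinct points lie in exactly $\lambda$ blocks and any two distinct blocks meet in exactly $\lambda$ points. Its order is $q=k-\lambda$. Its incidence graph is the bipartite graph on $X\cup\mathcal{B}$ with $x$ adjacent to $B$ iff $x\in B$. A resolving set of a connected graph is a set $S$ of vertices such that for any two distinct vertices $u,w$ some $s\in S$ has $d(u,s)\neq d(w,s)$; the metric dimension $\mu(\Gamma)$ is the minimum size of a resolving set. *)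

From mathcomp Require Import all_boot.
From Stdlib Require Import Reals.
Set Implicit Arguments. Unset Strict Implicit. Unset Printing Implicit Defensive.

Definition symmetric_design (v k lam : nat) (blk : 'I_v -> {set 'I_v}) : Prop :=
  [/\ forall B, #|blk B| = k,
      forall x y : 'I_v, x != y ->
        #|[set B | (x \in blk B) && (y \in blk B)]| = lam &
      forall B B' : 'I_v, B != B' -> #|blk B :&: blk B'| = lam].

Definition inc_adj (v : nat) (blk : 'I_v -> {set 'I_v}) : rel ('I_v + 'I_v) :=
  fun a b => match a, b with
  | inl x, inr B => x \in blk B
  | inr B, inl x => x \in blk B
  | _, _ => false
  end.

Section Graph.
Variables (V : finType) (adj : rel V).

Fixpoint walk (n : nat) (u w : V) : bool :=
  match n with
  | 0 => u == w
  | n'.+1 => [exists z, adj u z && walk n' z w]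
  end.

(* graph distance: least n with a walk of length n (#|V| if unreachable;
   irrelevant for connected graphs) *)
Definition gdist (u w : V) : nat := find (fun n => walk n u w) (iota 0 #|V|).

Definition resolving (S : {set V}) : bool :=
  [forall u, forall w, (u != w) ==> [exists s in S, gdist u s != gdist w s]].

Definition metric_dim : nat :=
  #|[arg min_(S < [set: V] | resolving S) #|S|]|.
End Graph.

From mathcomp Require Import all_boot.
From Stdlib Require Import Reals.
From Stdlib Require Import Lra Psatz.
From mathcomp Require Import ssrnat zify.

Set Implicit Arguments. Unset Strict Implicit. Unset Printing Implicit Defensive.

(* In the incidence graph of a symmetric design of order q = k - lam, every
   pair of distinct vertices is resolved by at least q vertices: two points x, y
   by the q blocks through x but not y (at distance 1 from x, not from y), two
   blocks likewise by q points, and a point and a block by every vertex, because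
   the graph is bipartite and connected.  A greedy choice of landmarks therefore
   halves the set of unresolved pairs with every ceil(n / q) landmarks, so
   O((n / q) log n) landmarks resolve all n^2 pairs.  Finally the parameter
   identity lam (v - 1) = k (k - 1) gives v <= 4 q^2, i.e. n / q = O(sqrt n). *)

Lemma sum_card_rel (I J : finType) (R : I -> J -> bool) :
  \sum_i #|[set j | R i j]| = \sum_j #|[set i | R i j]|.
Proof.
under eq_bigr do rewrite -sum1dep_card.
rewrite (exchange_big_dep xpredT) //=.
by apply: eq_bigr => j _; rewrite sum1dep_card.
Qed.

Section GreedyCover.
Variables (V X : finType) (sep : V -> X -> bool) (d h : nat).
Hypotheses (d_gt0 : 0 < d) (h_gt0 : 0 < h).
Hypothesis card_V : #|V| <= h * d.
Hypothesis sep_dense : forall x, d <= #|[set s | sep s x]|.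

Definition separated (s : V) : {set X} := [set x | sep s x].

Definition unseparated (T : {set V}) (P : {set X}) : {set X} :=
  P :\: \bigcup_(s in T) separated s.

Lemma unseparatedU T T' P :
  unseparated (T :|: T') P = unseparated T' (unseparated T P).
Proof. by rewrite /unseparated bigcup_setU setDDl. Qed.

Lemma exists_heavy_separator (U : {set X}) :
  U != set0 -> exists s, #|U| <= h * #|U :&: separated s|.
Proof.
case/set0Pn => x0 _.
have [s0 _] : exists s, s \in [set s | sep s x0].
  by apply/card_gt0P; apply: leq_trans (sep_dense x0).
pose c s := #|U :&: separated s|.
have [s _ max_s] := @arg_maxnP V s0 xpredT c isT.
exists s; rewrite -(leq_pmul2l d_gt0).
have sum_c : \sum_t c t = \sum_(x in U) #|[set s | sep s x]|.
  rewrite (eq_bigr (fun t => #|[set x | (x \in U) && sep t x]|)); last first.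
    by move=> t _; apply: eq_card => x; rewrite !inE.
  rewrite sum_card_rel [RHS]big_mkcond /=; apply: eq_bigr => x _.
  case: (x \in U) => //; apply/eqP; rewrite cards_eq0; apply/eqP/setP => t.
  by rewrite !inE.
have lower : d * #|U| <= \sum_t c t.
  by rewrite sum_c mulnC -sum_nat_const; apply: leq_sum.
have upper : \sum_t c t <= #|V| * c s.
  by rewrite -sum_nat_const; apply: leq_sum => t _; apply: max_s.
rewrite mulnA [d * h]mulnC; apply: leq_trans lower (leq_trans upper _).
exact: leq_mul.
Qed.

Lemma exists_halving_set P :
  exists2 T : {set V}, #|T| <= h & (#|unseparated T P|).*2 <= #|P|.
Proof.
(* While more than half of P is unseparated, each greedy choice separates
   more than #|P| / 2h new elements, so h choices suffice. *)
have greedy j : j <= h -> exists2 T : {set V}, #|T| <= j &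
    (#|unseparated T P|).*2 <= #|P| \/
    (h * #|unseparated T P|).*2 + j * #|P| <= (h * #|P|).*2.
  elim: j => [|j IHj] le_jh.
    by exists set0; rewrite ?cards0 //; right; rewrite /unseparated big_set0 setD0; lia.
  have [T le_Tj progress] := IHj (ltnW le_jh).
  set U := unseparated T P in progress *.
  have [halved | unhalved] := leqP (#|U|).*2 #|P|.
    by exists T; [exact: leqW | left].
  case: progress => [|progress]; first by rewrite leqNgt unhalved.
  have U_neq0 : U != set0 by rewrite -card_gt0; lia.
  have [s heavy] := exists_heavy_separator U_neq0.
  exists (T :|: [set s]).
    by apply: leq_trans (leq_card_setU _ _) _; rewrite cards1 addn1.
  right; rewrite unseparatedU -/U /unseparated big_set1 mulSn.
  have := cardsID (separated s) U; move/(congr1 (muln h)); rewrite mulnDr.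
  lia.
have [T le_Th halved_or_progress] := greedy h (leqnn h).
exists T => //; case: halved_or_progress => // progress.
by rewrite -(leq_pmul2l h_gt0) -doubleMr; lia.
Qed.

Lemma exists_unseparated_eq0 e (P : {set X}) : #|P| < 2 ^ e ->
  exists2 S : {set V}, #|S| <= h * e & unseparated S P = set0.
Proof.
elim: e P => [|e IHe] P small_P.
  have -> : P = set0 by apply/eqP; rewrite -cards_eq0; lia.
  by exists set0; rewrite ?cards0 // /unseparated set0D.
have [T le_Th halved] := exists_halving_set P.
have [S le_Se cover_S] : exists2 S : {set V},
    #|S| <= h * e & unseparated S (unseparated T P) = set0.
  by apply: IHe; rewrite expnS in small_P; lia.
exists (T :|: S); last by rewrite unseparatedU.
by apply: leq_trans (leq_card_setU _ _) _; rewrite mulnS leq_add.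
Qed.

Lemma exists_separating_set e : #|X| < 2 ^ e ->
  exists2 S : {set V}, #|S| <= h * e & forall x, exists2 s, s \in S & sep s x.
Proof.
rewrite -cardsT => small_X.
have [S le_Se cover_S] := exists_unseparated_eq0 small_X.
exists S => // x.
have : x \notin unseparated S setT by rewrite cover_S inE.
by rewrite !inE andbT negbK => /bigcupP [s sS]; rewrite inE; exists s.
Qed.
End GreedyCover.

Section Distance.
Variables (V : finType) (adj : rel V).

Lemma walk1 u w : walk adj 1 u w = adj u w.
Proof.
apply/existsP/idP => [[z /andP [uz /eqP <-]] // | uw].
by exists w; rewrite uw eqxx.
Qed.

Lemma walk_cat m n u z w :
  walk adj m u z -> walk adj n z w -> walk adj (m + n) u w.
Proof.
elim: m u => [|m IHm] u /=; first by move/eqP ->.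
case/existsP => y /andP [uy yz] zw.
by apply/existsP; exists y; rewrite uy (IHm y yz zw).
Qed.

Lemma gdist_le_walk n u w : walk adj n u w -> gdist adj u w <= n.
Proof.
move=> walk_n; rewrite /gdist.
have [n_lt | n_ge] := ltnP n #|V|; last first.
  by apply: leq_trans (find_size _ _) _; rewrite size_iota.
rewrite leqNgt; apply/negP => /(before_find 0).
by rewrite nth_iota // add0n walk_n.
Qed.

Lemma gdist_walk u w : gdist adj u w < #|V| -> walk adj (gdist adj u w) u w.
Proof.
rewrite {1}/gdist => found.
have has_walk : has (fun n => walk adj n u w) (iota 0 #|V|).
  by rewrite has_find size_iota.
by have := nth_find 0 has_walk; rewrite nth_iota // add0n.
Qed.

Lemma gdist_eq1 u w : u != w -> (gdist adj u w == 1) = adj u w.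
Proof.
move=> neq_uw.
have card_gt1 : 1 < #|V| by apply/card_gt1P; exists u, w.
apply/eqP/idP => [d1 | uw].
  by rewrite -walk1 -d1 gdist_walk // d1.
have : gdist adj u w <= 1 by apply: gdist_le_walk; rewrite walk1.
case: (posnP (gdist adj u w)) => [d0 | ]; last by lia.
by have := @gdist_walk u w; rewrite d0 /= (negbTE neq_uw) => /(_ (ltnW card_gt1)).
Qed.

Lemma odd_walk (side : V -> bool) :
  (forall u w, adj u w -> side u != side w) ->
  forall n u w, walk adj n u w -> odd n = (side u != side w).
Proof.
move=> adj_side; elim=> [|n IHn] u w /=; first by move/eqP ->; rewrite eqxx.
case/existsP => z /andP [/adj_side uz /IHn ->].
by move: uz; case: (side u); case: (side z); case: (side w).
Qed.

Definition resolves (s : V) (p : V * V) : bool :=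
  (p.1 != p.2) ==> (gdist adj p.1 s != gdist adj p.2 s).

Lemma resolving_of_resolves (S : {set V}) :
  (forall p, exists2 s, s \in S & resolves s p) -> resolving adj S.
Proof.
move=> res; apply/forallP => u; apply/forallP => w; apply/implyP => neq_uw.
have [s sS] := res (u, w); rewrite /resolves /= neq_uw => /= diff.
by apply/existsP; exists s; rewrite sS.
Qed.

Lemma resolvingS (S T : {set V}) : S \subset T -> resolving adj S -> resolving adj T.
Proof.
move=> sST /forallP res; apply/forallP => u; apply/forallP => w.
apply/implyP => neq_uw; have /forallP/(_ w)/implyP/(_ neq_uw) := res u.
by case/existsP => s /andP [sS diff]; apply/existsP; exists s; rewrite (subsetP sST).
Qed.

Lemma metric_dim_le (S : {set V}) : resolving adj S -> metric_dim adj <= #|S|.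
Proof.
move=> res_S; have res_T : resolving adj [set: V] by apply: resolvingS res_S.
by rewrite /metric_dim; case: (arg_minnP (fun T : {set V} => #|T|) res_T) => T _; apply.
Qed.

Lemma metric_dim_empty : #|V| = 0 -> metric_dim adj = 0.
Proof.
move=> V0; apply/eqP; rewrite -leqn0 -(cards0 V); apply: metric_dim_le.
by apply/forallP => u; have := card0_eq V0 u; rewrite inE.
Qed.
End Distance.

Section SymmetricDesign.
Variables (v k lam : nat) (blk : 'I_v -> {set 'I_v}).
Hypothesis design : symmetric_design k lam blk.

Definition blocks_through (x : 'I_v) : {set 'I_v} := [set B | x \in blk B].

Lemma k_le_v (B : 'I_v) : k <= v.
Proof.
have [card_blk _ _] := design.
by rewrite -(card_blk B) -[X in _ <= X]card_ord max_card.
Qed.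

Lemma sum_card_blocks_through : \sum_x #|blocks_through x| = v * k.
Proof.
have [card_blk _ _] := design.
transitivity (\sum_(B : 'I_v) k); last by rewrite sum_nat_const card_ord.
rewrite (sum_card_rel (fun x B => x \in blk B)); apply: eq_bigr => B _.
by rewrite -(card_blk B); apply: eq_card => x; rewrite inE.
Qed.

Lemma card_blocks_through_mul x : #|blocks_through x| * k.-1 = lam * v.-1.
Proof.
have [card_blk pair_blk _] := design.
pose R y B := [&& y != x, x \in blk B & y \in blk B].
have pairs_by_point y : #|[set B | R y B]| = if y != x then lam else 0.
  case: (boolP (y != x)) => [neq_yx | /negPf eq_yx]; last first.
    by apply/eqP; rewrite cards_eq0; apply/eqP/setP => B; rewrite !inE /R eq_yx.
  rewrite -(pair_blk x y); last by rewrite eq_sym.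
  by apply: eq_card => B; rewrite !inE /R neq_yx.
have pairs_by_block B : #|[set y | R y B]| = if x \in blk B then k.-1 else 0.
  case: (boolP (x \in blk B)) => [xB | /negPf xB]; last first.
    by apply/eqP; rewrite cards_eq0; apply/eqP/setP => y; rewrite !inE /R xB andbF.
  rewrite -(card_blk B) (cardsD1 x (blk B)) xB; apply: eq_card => y.
  by rewrite !inE /R xB.
have := sum_card_rel R.
rewrite (eq_bigr _ (fun y _ => pairs_by_point y)) (eq_bigr _ (fun B _ => pairs_by_block B)).
rewrite -!big_mkcond !sum_nat_const cardC1 card_ord mulnC => ->.
by apply: congr2 => //; apply: eq_card => B; rewrite inE.
Qed.

Hypothesis k_gt1 : 1 < k.

Lemma card_blocks_through x : #|blocks_through x| = k.
Proof.
have same_r y : #|blocks_through y| = #|blocks_through x|.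
  apply/eqP; rewrite -(eqn_pmul2r (_ : 0 < k.-1)); last by lia.
  by rewrite (card_blocks_through_mul x) (card_blocks_through_mul y).
have := sum_card_blocks_through; under eq_bigr do rewrite same_r.
rewrite sum_nat_const card_ord => /eqP; rewrite eqn_pmul2l => [/eqP //|].
exact: leq_ltn_trans (ltn_ord x).
Qed.

Lemma symmetric_design_identity (x : 'I_v) : lam * v.-1 = k * k.-1.
Proof. by rewrite -(card_blocks_through_mul x) card_blocks_through. Qed.

Lemma card_blocks_throughD x y :
  x != y -> #|blocks_through x :\: blocks_through y| = k - lam.
Proof.
have [_ pair_blk _] := design => neq_xy.
rewrite -(card_blocks_through x) -(cardsID (blocks_through y) (blocks_through x)).
have -> : blocks_through x :&: blocks_through y =
          [set B | (x \in blk B) && (y \in blk B)] by apply/setP => B; rewrite !inE.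
by rewrite pair_blk // addKn.
Qed.

Lemma card_blkD B B' : B != B' -> #|blk B :\: blk B'| = k - lam.
Proof.
have [card_blk _ blk_pair] := design => neq_BB'.
by rewrite -(card_blk B) -(cardsID (blk B') (blk B)) blk_pair // addKn.
Qed.
End SymmetricDesign.

(* The equation reads (m - q)(v - 1) = m(m - 1); together with m < 2q, which
   follows from 2m <= v, it forces q < m and hence v - 1 <= m(m - 1) < 4q^2. *)
Lemma le_sqr_of_mul_compl m v q :
  2 <= q -> m.*2 <= v -> m * (v - m) = q * v.-1 -> v <= 4 * q ^ 2.
Proof.
move=> q_ge2 half eq_mq.
have [v_le1 | v_gt1] := leqP v 1; first by nia.
have m_lt : m < q.*2 by nia.
have shifted : m * m.-1 + q * v.-1 = m * v.-1 by nia.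
have q_lt : q < m by nia.
nia.
Qed.

(* The identity k (v - k) = q (v - 1) is invariant under k |-> v - k (passing to
   the complementary design), so it can be applied to min(k, v - k) <= v / 2. *)
Lemma v_le_order_sqr v k lam :
  lam * v.-1 = k * k.-1 -> 2 <= k - lam -> k <= v -> v <= 4 * (k - lam) ^ 2.
Proof.
move=> param_eq q_ge2 k_le_v.
have compl : k * (v - k) = (k - lam) * v.-1 by nia.
have [half | half] := leqP k.*2 v; first exact: le_sqr_of_mul_compl half compl.
apply: (@le_sqr_of_mul_compl (v - k)) => //; first lia.
by rewrite subKn // mulnC.
Qed.

Definition is_point (v : nat) (u : 'I_v + 'I_v) : bool :=
  if u is inl _ then true else false.

Lemma inc_adj_side v (blk : 'I_v -> {set 'I_v}) u w :
  inc_adj blk u w -> is_point u != is_point w.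
Proof. by case: u => ?; case: w. Qed.

Section IncidenceGraph.
Variables (v k lam : nat) (blk : 'I_v -> {set 'I_v}).
Hypothesis design : symmetric_design k lam blk.
Hypotheses (k_gt1 : 1 < k) (lam_gt0 : 0 < lam).

Local Notation V := ('I_v + 'I_v)%type.
Local Notation adj := (inc_adj blk).

Lemma exists_block_through2 x y : exists B, (x \in blk B) && (y \in blk B).
Proof.
have [_ pair_blk _] := design.
have : 0 < #|[set B | (x \in blk B) && (y \in blk B)]|.
  have [<- | neq_xy] := eqVneq x y; last by rewrite pair_blk.
  have -> : [set B | (x \in blk B) && (x \in blk B)] = blocks_through blk x.
    by apply/setP => B; rewrite !inE andbb.
  by rewrite (card_blocks_through design k_gt1) ltnW.
by case/card_gt0P => B; rewrite inE; exists B.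
Qed.

Lemma exists_common_point B B' : exists x, (x \in blk B) && (x \in blk B').
Proof.
have [card_blk _ blk_pair] := design.
have : 0 < #|blk B :&: blk B'|.
  by have [<- | neq_BB'] := eqVneq B B'; rewrite ?setIid ?card_blk ?blk_pair //; lia.
by case/card_gt0P => x; rewrite inE; exists x.
Qed.

Lemma inc_walk2_points x y : walk adj 2 (inl x) (inl y).
Proof.
have [B /andP [xB yB]] := exists_block_through2 x y.
by apply: (@walk_cat _ _ 1 1 _ (inr B)); rewrite walk1.
Qed.

Lemma inc_walk2_blocks B B' : walk adj 2 (inr B) (inr B').
Proof.
have [x /andP [xB xB']] := exists_common_point B B'.
by apply: (@walk_cat _ _ 1 1 _ (inl x)); rewrite walk1.
Qed.

Lemma inc_walk_le3 u w : exists2 n, n <= 3 & walk adj n u w.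
Proof.
case: u w => [x | B] [y | B'].
- by exists 2; rewrite ?inc_walk2_points.
- have [B /andP [xB _]] := exists_block_through2 x x.
  exists 3 => //; apply: (@walk_cat _ _ 1 2 _ (inr B)).
  + by rewrite walk1.
  + exact: inc_walk2_blocks.
- have [B' /andP [yB' _]] := exists_block_through2 y y.
  exists 3 => //; apply: (@walk_cat _ _ 2 1 _ (inr B')).
  + exact: inc_walk2_blocks.
  + by rewrite walk1.
- by exists 2; rewrite ?inc_walk2_blocks.
Qed.

Lemma inc_gdist_walk u w : walk adj (gdist adj u w) u w.
Proof.
have [n le_n3 walk_n] := inc_walk_le3 u w.
apply: gdist_walk; apply: leq_ltn_trans (gdist_le_walk walk_n) _.
rewrite card_sum card_ord.
by case: u {walk_n} => x; have := k_le_v design x; lia.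
Qed.

Lemma odd_inc_gdist u w : odd (gdist adj u w) = (is_point u != is_point w).
Proof. exact: odd_walk (@inc_adj_side v blk) _ _ _ (inc_gdist_walk u w). Qed.

Lemma card_resolvers p : k - lam <= #|[set s | resolves adj s p]|.
Proof.
case: p => u w.
have [all_resolve | ] :=
    boolP [forall s, resolves adj s (u, w)]; last rewrite negb_forall.
  rewrite (eq_card (B := [set: V])) => [|s]; last first.
    by rewrite !inE (forallP all_resolve).
  rewrite cardsT card_sum card_ord.
  by case: u {all_resolve} => x; have := k_le_v design x; lia.
case/existsP => s0; rewrite /resolves /= negb_imply negbK => /andP [neq_uw /eqP eq_d].
case: u w neq_uw eq_d => [x | B] [y | B'] neq_uw eq_d.
- have neq_xy : x != y by apply: contraNneq neq_uw => ->.
  rewrite -(card_blocks_throughD design k_gt1 neq_xy) -(card_imset _ (@inr_inj 'I_v 'I_v)).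
  apply/subset_leq_card/subsetP => _ /imsetP [B + ->]; rewrite !inE => /andP [xB yB].
  rewrite /resolves /= neq_uw /=.
  have /eqP -> : gdist adj (inl x) (inr B) == 1 by rewrite gdist_eq1.
  by rewrite eq_sym gdist_eq1.
- by have := odd_inc_gdist (inl x) s0; rewrite eq_d odd_inc_gdist; case: s0 {eq_d}.
- by have := odd_inc_gdist (inr B) s0; rewrite eq_d odd_inc_gdist; case: s0 {eq_d}.
- have neq_BB' : B != B' by apply: contraNneq neq_uw => ->.
  rewrite -(card_blkD design neq_BB') -(card_imset _ (@inl_inj 'I_v 'I_v)).
  apply/subset_leq_card/subsetP => _ /imsetP [x + ->]; rewrite !inE => /andP [xB' xB].
  rewrite /resolves /= neq_uw /=.
  have /eqP -> : gdist adj (inr B) (inl x) == 1 by rewrite gdist_eq1.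
  by rewrite eq_sym gdist_eq1.
Qed.

Lemma exists_small_resolving_set h e :
  lam < k -> 0 < h -> #|{: V}| <= h * (k - lam) -> #|{: V * V}| < 2 ^ e ->
  exists2 S : {set V}, #|S| <= h * e & resolving adj S.
Proof.
move=> lt_lam_k h_gt0 card_V small.
have [|S card_S resolves_S] := exists_separating_set _ h_gt0 card_V card_resolvers small.
  by rewrite subn_gt0.
by exists S => //; apply: resolving_of_resolves.
Qed.
End IncidenceGraph.

Lemma metric_dim_inc_le v k lam (blk : 'I_v -> {set 'I_v}) :
  symmetric_design k lam blk -> 2 <= k - lam -> 0 < v ->
  metric_dim (inc_adj blk) <=
    ((2 * v) %/ (k - lam)).+1 * (trunc_log 2 (2 * v)).+1.*2.
Proof.
move=> design q_ge2 v_gt0.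
have k_gt1 : 1 < k by lia.
have param_eq := symmetric_design_identity design k_gt1 (Ordinal v_gt0).
have lam_gt0 : 0 < lam by nia.
set h := _.+1; set e := _.+1.*2.
have [S card_S res_S] : exists2 S : {set 'I_v + 'I_v},
    #|S| <= h * e & resolving (inc_adj blk) S.
  apply: (exists_small_resolving_set design k_gt1 lam_gt0) => //.
  - by rewrite -subn_gt0 ltnW.
  - by rewrite card_sum card_ord addnn -mul2n ltnW // ltn_ceil // ltnW.
  - have lt_pow := trunc_log_ltn (2 * v) (isT : 1 < 2).
    by rewrite /e card_prod card_sum card_ord addnn -mul2n -addnn expnD ltn_mul.
exact: leq_trans (metric_dim_le res_S) card_S.
Qed.

Lemma sqr_ceil_div_le h q v :
  0 < v -> 2 <= q -> v <= 4 * q ^ 2 -> h * q <= 2 * v + q -> h ^ 2 <= 25 * v.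
Proof.
move=> v_gt0 q_ge2 v_le hq.
rewrite -(@leq_pmul2r (q ^ 2)) ?expn_gt0 ?(ltnW q_ge2) // -expnMn.
apply: leq_trans (_ : (2 * v + q) ^ 2 <= _); first by rewrite leq_sqr.
have : 4 * v * v <= 16 * v * q ^ 2 by nia.
have : 4 * v * q <= 2 * v * q ^ 2 by nia.
have : q ^ 2 <= v * q ^ 2 by nia.
nia.
Qed.

(* h <= 5 sqrt v and e <= 4 m give the constant 20. *)
Lemma sqr_landmark_bound v q : 0 < v -> 2 <= q -> v <= 4 * q ^ 2 ->
  (((2 * v) %/ q).+1 * (trunc_log 2 (2 * v)).+1.*2) ^ 2 <=
    20 ^ 2 * (2 * v) * trunc_log 2 (2 * v) ^ 2.
Proof.
move=> v_gt0 q_ge2 v_le; set h := _.+1; set m := trunc_log 2 _.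
have hq : h * q <= 2 * v + q by rewrite /h mulSn addnC leq_add2r leq_divM.
have h_sqr : h ^ 2 <= 25 * v by apply: sqr_ceil_div_le hq.
have m_gt0 : 0 < m by rewrite trunc_log_gt0; lia.
have e_sqr : m.+1.*2 ^ 2 <= 16 * m ^ 2.
  by rewrite (_ : 16 = 4 ^ 2) // -expnMn leq_sqr; lia.
rewrite expnMn; apply: leq_trans (leq_mul h_sqr e_sqr) _.
by rewrite mulnA leq_mul2r; apply/orP; right; lia.
Qed.

Lemma INR_expn a b : INR (a ^ b) = (INR a ^ b)%R.
Proof. by elim: b => [|b IHb] //=; rewrite expnS -multE mult_INR IHb. Qed.

Lemma INR_le_sqrt_ln (N n m c : nat) :
  N ^ 2 <= c ^ 2 * n * m ^ 2 -> 2 ^ m <= n ->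
  (INR N <= INR c / ln 2 * sqrt (INR n) * ln (INR n))%R.
Proof.
move=> /leP/le_INR sq /leP/le_INR pow2m.
rewrite -!multE !mult_INR in sq.
rewrite INR_expn (_ : INR 2 = 2%R) in pow2m; last by rewrite /=; lra.
have ln2_gt0 : (0 < ln 2)%R by have := ln_lt_2; lra.
have pow2m_gt0 : (0 < 2 ^ m)%R by apply: pow_lt; lra.
have ln_pow2m : (INR m * ln 2 <= ln (INR n))%R.
  rewrite -ln_pow; last lra.
  have [lt | ->] := Rle_lt_or_eq_dec _ _ pow2m; last exact: Rle_refl.
  by apply: Rlt_le; apply: ln_increasing.
have s_ge0 := sqrt_pos (INR n).
have ss := sqrt_sqrt (INR n) (pos_INR n).
have c_ge0 := pos_INR c; have m_ge0 := pos_INR m.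
have N_le : (INR N <= INR c * sqrt (INR n) * INR m)%R.
  apply: Rsqr_incr_0_var; last by apply: Rmult_le_pos => //; apply: Rmult_le_pos.
  rewrite /Rsqr; nra.
apply: (Rle_trans _ _ _ N_le).
rewrite (_ : INR c / ln 2 * sqrt (INR n) * ln (INR n) =
             INR c * sqrt (INR n) * (ln (INR n) / ln 2))%R; last by field; lra.
apply: Rmult_le_compat_l; first by apply: Rmult_le_pos.
apply: (Rmult_le_reg_r (ln 2)) => //.
by rewrite /Rdiv Rmult_assoc Rinv_l; lra.
Qed.

Theorem corollary2p7 :
  exists C : R,
    forall (v k lam : nat) (blk : 'I_v -> {set 'I_v}),
      symmetric_design k lam blk ->
      (2 <= k - lam)%N ->
      let n := (2 * v)%N in
      (INR (metric_dim (inc_adj blk)) <= C * sqrt (INR n) * ln (INR n))%R.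
Proof.
exists (INR 20 / ln 2)%R => v k lam blk design q_ge2 n; rewrite {}/n.
have [v0 | v_gt0] := posnP v.
  by rewrite metric_dim_empty ?card_sum ?card_ord v0 //= sqrt_0; lra.
have k_gt1 : 1 < k by lia.
have x0 : 'I_v := Ordinal v_gt0.
have v_le := v_le_order_sqr (symmetric_design_identity design k_gt1 x0) q_ge2
  (k_le_v design x0).
have pow_m : 2 ^ trunc_log 2 (2 * v) <= 2 * v by apply: trunc_logP; lia.
apply: Rle_trans (INR_le_sqrt_ln (sqr_landmark_bound v_gt0 q_ge2 v_le) pow_m).
by apply/le_INR/leP; apply: metric_dim_inc_le.
Qed.
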